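(* For the asynchronous Sinkhorn iteration described in the context, initialized with $v^{(0)}=1_Y$ (all ones), and any $q_{\mathrm{target}}\in(0,1)$, there exists $n\le 2+\frac{C}{\varepsilon(1-q_{\mathrm{target}})}$ with $q^{(n)}\ge q_{\mathrm{target}}$, where $C=\max_{x,y}c(x,y)$. Moreover, $\langle u^{(\ell)},\mu\rangle\le\exp(C/\varepsilon)$ for all $\ell\ge1$.
   Context: $X,Y$ finite sets, $\mu\in\mathcal P(X)$, $\nu\in\mathcal P(Y)$ with strictly positive entries, $c\in\mathbb R_+^{X\times Y}$, $\varepsilon>0$, kernel $K(x,y)=\exp(-c(x,y)/\varepsilon)\mu(x)\nu(y)$. Asynchronous Sinkhorn iteration: given $v^{(0)}\in\mathbb R_{++}^Y$, for $\ell\ge0$: $u^{(\ell+1)}=\mu\oslash(Kv^{(\ell)})$, $\hat v^{(\ell+1)}=\nu\oslash(K^\top u^{(\ell+1)})$, $v^{(\ell+1)}=\min\{v^{(\ell)},\hat v^{(\ell+1)}\}$ componentwise, $\pi^{(\ell+1)}=\mathrm{diag}(u^{(\ell+1)})K\mathrm{diag}(v^{(\ell+1)})$, $q^{(\ell+1)}=\sum_{x,y}\pi^{(\ell+1)}(x,y)$; $\oslash$ is componentwise division. *)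

From HB Require Import structures.
From mathcomp Require Import all_boot all_order all_algebra.
From mathcomp Require Import all_classical all_reals all_analysis.
Set Implicit Arguments. Unset Strict Implicit. Unset Printing Implicit Defensive.
Import Order.TTheory GRing.Theory Num.Theory.
Local Open Scope ring_scope.

Section Sinkhorn.
Variables (R : realType) (X Y : finType).
Variables (mu : X -> R) (nu : Y -> R) (c : X -> Y -> R) (eps : R).

Definition kernel (x : X) (y : Y) : R := expR (- (c x y / eps)) * mu x * nu y.

Definition u_of (v : Y -> R) : X -> R :=
  fun x => mu x / (\sum_(y : Y) kernel x y * v y).

Definition vhat_of (u : X -> R) : Y -> R :=
  fun y => nu y / (\sum_(x : X) kernel x y * u x).

Definition v_next (v : Y -> R) : Y -> R :=
  fun y => Num.min (v y) (vhat_of (u_of v) y).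

Fixpoint sink_v (l : nat) : Y -> R :=
  match l with
  | 0 => fun _ => 1
  | l'.+1 => v_next (sink_v l')
  end.

(* u^{(l)} = mu ./ (K v^{(l-1)}), meaningful for l >= 1 *)
Definition sink_u (l : nat) : X -> R := u_of (sink_v l.-1).

Definition sink_pi (l : nat) (x : X) (y : Y) : R :=
  sink_u l x * kernel x y * sink_v l y.

Definition sink_q (l : nat) : R := \sum_(x : X) \sum_(y : Y) sink_pi l x y.

(* C = max_{x,y} c(x,y)  (c >= 0, so 0 is a neutral start) *)
Definition cmax : R := \big[Num.max/0]_(p : X * Y) c p.1 p.2.

End Sinkhorn.

From Pilot Require Import Defs.
From HB Require Import structures.
From mathcomp Require Import all_boot all_order all_algebra.
From mathcomp Require Import all_classical all_reals all_analysis.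
From mathcomp Require Import lra.
Import Order.TTheory GRing.Theory Num.Theory.
Local Open Scope ring_scope.

Set Implicit Arguments. Unset Strict Implicit. Unset Printing Implicit Defensive.

(* The potential Psi_l = sum_x mu(x) ln u^(l)(x) grows by at least 1 - q^(l)
   per step, because ln t <= t - 1 and u^(l+1) = mu ./ (K v^(l)).  It starts
   nonnegative, since K <= mu (x) nu forces u^(1) >= 1, and it never exceeds
   C/eps: some coordinate of v^(l) keeps its initial value 1 (if all of them
   dropped at once, nu <= v^(l) .* K^T u^(l+1) with a strict inequality
   somewhere would contradict <v, K^T (mu ./ K v)> = <mu, 1> = 1), at that
   coordinate vhat >= 1 yields <u^(l), mu> <= exp(C/eps), and concavity of ln
   gives Psi_l <= ln <u^(l), mu>.  Hence q^(l) < q_target cannot persist for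
   more than C/(eps (1 - q_target)) steps. *)

Lemma inhabited_of_sumr_neq0 (V : nmodType) (I : finType) (F : I -> V) :
  \sum_i F i != 0 -> inhabited I.
Proof.
case: (pickP (@predT I)) => [i _ _ | none]; first exact: inhabits i.
by rewrite big_pred0 ?eqxx.
Qed.

Lemma sumr_gt0 (R : numDomainType) (I : finType) (i0 : I) (F : I -> R) :
  (forall i, 0 < F i) -> 0 < \sum_i F i.
Proof.
move=> F_gt0; rewrite (bigD1 i0) //=; apply: lt_le_trans (F_gt0 i0) _.
by rewrite lerDl sumr_ge0 // => i _; exact: ltW.
Qed.

Lemma ln_le_subr1 (R : realType) (z : R) : 0 < z -> ln z <= z - 1.
Proof.
move=> z_gt0; have z1_gt : -1 < z - 1 by lra.
by have := le_ln1Dx z1_gt; rewrite addrC subrK.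
Qed.

Lemma lnB_le_div (R : realType) (a b : R) : 0 < a -> 0 < b ->
  ln b - ln a <= b / a - 1.
Proof. by move=> a_gt0 b_gt0; rewrite -ln_div ?posrE // ln_le_subr1 ?divr_gt0. Qed.

Lemma sum_mul_lnB_le (R : realType) (I : finType) (w a b : I -> R) :
  (forall i, 0 <= w i) -> (forall i, 0 < a i) -> (forall i, 0 < b i) ->
  \sum_i w i * (ln (b i) - ln (a i)) <= \sum_i w i * (b i / a i) - \sum_i w i.
Proof.
move=> w_ge0 a_gt0 b_gt0; rewrite -sumrB; apply: ler_sum => i _.
by rewrite -[X in _ <= _ - X]mulr1 -mulrBr ler_wpM2l ?lnB_le_div.
Qed.

Lemma sum_mul_ln_le_ln_sum (R : realType) (I : finType) (w u : I -> R) :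
  (forall i, 0 < w i) -> \sum_i w i = 1 -> (forall i, 0 < u i) ->
  \sum_i w i * ln (u i) <= ln (\sum_i w i * u i).
Proof.
move=> w_gt0 w_sum1 u_gt0; set M := \sum_i w i * u i.
have [i0] : inhabited I.
  by apply: (inhabited_of_sumr_neq0 (F := w)); rewrite w_sum1 oner_neq0.
have M_gt0 : 0 < M by apply: (sumr_gt0 i0) => i; rewrite mulr_gt0.
have := sum_mul_lnB_le (fun i => ltW (w_gt0 i)) (fun=> M_gt0) u_gt0.
have -> : \sum_i w i * (ln (u i) - ln M) = \sum_i w i * ln (u i) - ln M.
  by under eq_bigr do rewrite mulrBr; rewrite sumrB -big_distrl /= w_sum1 mul1r.
have -> : \sum_i w i * (u i / M) = 1.
  by under eq_bigr do rewrite mulrA; rewrite -big_distrl /= divff ?gt_eqF.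
by rewrite w_sum1 subrr subr_le0.
Qed.

Section AsynchronousSinkhorn.
Variables (R : realType) (X Y : finType).
Variables (mu : X -> R) (nu : Y -> R) (c : X -> Y -> R) (eps : R).
Hypotheses (hmu_pos : forall x, 0 < mu x) (hmu_sum : \sum_(x : X) mu x = 1)
  (hnu_pos : forall y, 0 < nu y) (hnu_sum : \sum_(y : Y) nu y = 1)
  (hc : forall x y, 0 <= c x y) (heps : 0 < eps).

Local Notation K := (Defs.kernel mu nu c eps).
Local Notation C := (cmax c).
Local Notation u_of := (u_of mu nu c eps).
Local Notation vhat_of := (vhat_of mu nu c eps).
Local Notation sink_v := (sink_v mu nu c eps).
Local Notation sink_u := (sink_u mu nu c eps).
Local Notation sink_q := (sink_q mu nu c eps).

Definition Kv (v : Y -> R) (x : X) : R := \sum_y K x y * v y.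
Definition Ktu (u : X -> R) (y : Y) : R := \sum_x K x y * u x.

Lemma inhabited_X : inhabited X.
Proof. by apply: (inhabited_of_sumr_neq0 (F := mu)); rewrite hmu_sum oner_neq0. Qed.

Lemma inhabited_Y : inhabited Y.
Proof. by apply: (inhabited_of_sumr_neq0 (F := nu)); rewrite hnu_sum oner_neq0. Qed.

Lemma c_le_cmax x y : c x y <= C.
Proof. exact: (le_bigmax 0 (fun p : X * Y => c p.1 p.2) (x, y)). Qed.

Lemma cmax_ge0 : 0 <= C.
Proof. exact: bigmax_ge_id. Qed.

Lemma kernel_gt0 x y : 0 < K x y.
Proof. by rewrite /Defs.kernel !mulr_gt0 ?expR_gt0. Qed.

Lemma kernel_le x y : K x y <= mu x * nu y.
Proof.
rewrite /Defs.kernel -mulrA ler_piMl //; first by rewrite mulr_ge0 // ltW.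
by rewrite expR_le1 oppr_le0 divr_ge0 // ltW.
Qed.

Lemma kernel_ge x y : expR (- (C / eps)) * (mu x * nu y) <= K x y.
Proof.
rewrite /Defs.kernel -mulrA ler_pM2r ?mulr_gt0 // ler_expR lerN2.
by rewrite ler_pM2r ?invr_gt0 // c_le_cmax.
Qed.

Lemma Kv_gt0 (v : Y -> R) x : (forall y, 0 < v y) -> 0 < Kv v x.
Proof.
case: inhabited_Y => y0 v_gt0.
by apply: (sumr_gt0 y0) => y; rewrite mulr_gt0 ?kernel_gt0.
Qed.

Lemma Ktu_gt0 (u : X -> R) y : (forall x, 0 < u x) -> 0 < Ktu u y.
Proof.
case: inhabited_X => x0 u_gt0.
by apply: (sumr_gt0 x0) => x; rewrite mulr_gt0 ?kernel_gt0.
Qed.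

Lemma u_of_gt0 (v : Y -> R) x : (forall y, 0 < v y) -> 0 < u_of v x.
Proof. by move=> v_gt0; rewrite divr_gt0 ?(Kv_gt0 x v_gt0). Qed.

Lemma vhat_of_gt0 (u : X -> R) y : (forall x, 0 < u x) -> 0 < vhat_of u y.
Proof. by move=> u_gt0; rewrite divr_gt0 ?(Ktu_gt0 y u_gt0). Qed.

Lemma u_of_anti (v v' : Y -> R) x :
  (forall y, 0 < v' y) -> (forall y, v' y <= v y) -> u_of v x <= u_of v' x.
Proof.
move=> v'_gt0 le_v'v; have v_gt0 y := lt_le_trans (v'_gt0 y) (le_v'v y).
rewrite /Defs.u_of ler_wpM2l ?(ltW (hmu_pos x)) // lef_pV2 ?posrE ?Kv_gt0 //.
by apply: ler_sum => y _; rewrite ler_pM2l ?kernel_gt0.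
Qed.

Lemma vhat_of_anti (u u' : X -> R) y :
  (forall x, 0 < u x) -> (forall x, u x <= u' x) -> vhat_of u' y <= vhat_of u y.
Proof.
move=> u_gt0 le_uu'; have u'_gt0 x := lt_le_trans (u_gt0 x) (le_uu' x).
rewrite /Defs.vhat_of ler_wpM2l ?(ltW (hnu_pos y)) // lef_pV2 ?posrE ?Ktu_gt0 //.
by apply: ler_sum => x _; rewrite ler_pM2l ?kernel_gt0.
Qed.

Lemma sum_v_mul_Ktu_u_of (v : Y -> R) : (forall y, 0 < v y) ->
  \sum_y v y * Ktu (u_of v) y = 1.
Proof.
move=> v_gt0; rewrite -hmu_sum.
under eq_bigr do rewrite /Ktu big_distrr /=.
rewrite exchange_big /=; apply: eq_bigr => x _.
rewrite (eq_bigr (fun y => u_of v x * (K x y * v y))) => [|y _]; last first.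
  by rewrite mulrCA [RHS]mulrCA [v y * _]mulrC.
by rewrite -big_distrr; apply: divfK; rewrite gt_eqF ?(Kv_gt0 x v_gt0).
Qed.

Definition sink_vhat (l : nat) : Y -> R := vhat_of (sink_u l).

Lemma sink_vS l y : sink_v l.+1 y = Num.min (sink_v l y) (sink_vhat l.+1 y).
Proof. by []. Qed.

Lemma sink_uSE l x : sink_u l.+1 x = mu x / Kv (sink_v l) x.
Proof. by []. Qed.

Lemma sink_vhatE l y : sink_vhat l y = nu y / Ktu (sink_u l) y.
Proof. by []. Qed.

Lemma sink_v_gt0 l y : 0 < sink_v l y.
Proof.
elim: l y => [|l IH] y; first exact: ltr01.
by rewrite sink_vS lt_min IH vhat_of_gt0 // => x; exact: u_of_gt0.
Qed.

Lemma sink_u_gt0 l x : 0 < sink_u l x.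
Proof. exact/u_of_gt0/sink_v_gt0. Qed.

Lemma sink_v_decr l y : sink_v l.+1 y <= sink_v l y.
Proof. by rewrite sink_vS ge_min lexx. Qed.

Lemma sink_vhat_decr l y : sink_vhat l.+2 y <= sink_vhat l.+1 y.
Proof.
apply: vhat_of_anti => x; first exact: sink_u_gt0.
by apply: u_of_anti => y'; [exact: sink_v_gt0 | exact: sink_v_decr].
Qed.

(* Once v(y) has left 1 it equals an earlier vhat(y), and vhat is nonincreasing. *)
Lemma sink_v_eq1_or_vhat_le l y :
  sink_v l y = 1 \/ sink_vhat l.+1 y <= sink_v l y.
Proof.
elim: l y => [|l IH] y; first by left.
rewrite sink_vS.
case: (leP (sink_vhat l.+1 y) (sink_v l y)) => [vhat_le | v_lt].
  by right; exact: sink_vhat_decr.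
left; case: (IH y) => // vhat_le.
by move: v_lt; rewrite ltNge vhat_le.
Qed.

Lemma exists_sink_v_eq1 l : exists y, sink_v l y = 1.
Proof.
elim: l => [|l [y1 v_y1]]; first by case: inhabited_Y => y; exists y.
case: (boolP [exists y, sink_v l.+1 y == 1]).
  by move=> /existsP[y /eqP]; exists y.
move=> /existsPn none1.
exfalso.
have vhat_lt y : sink_v l y = 1 -> sink_vhat l.+1 y < 1.
  move=> v_y; rewrite ltNge; apply: contra (none1 y) => le_vhat.
  by rewrite sink_vS v_y min_l.
have Ktu_pos y : 0 < Ktu (sink_u l.+1) y by apply/Ktu_gt0/sink_u_gt0.
have nu_le y : nu y <= sink_v l y * Ktu (sink_u l.+1) y.
  rewrite -ler_pdivrMr // -sink_vhatE.
  by case: (sink_v_eq1_or_vhat_le l y) => // v_y; rewrite v_y ltW ?vhat_lt.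
have nu_lt : nu y1 < sink_v l y1 * Ktu (sink_u l.+1) y1.
  by rewrite -ltr_pdivrMr // -sink_vhatE v_y1 vhat_lt.
have : \sum_y nu y < \sum_y sink_v l y * Ktu (sink_u l.+1) y.
  rewrite (bigD1 y1) //= [ltRHS](bigD1 y1) //=.
  by rewrite ltr_leD // ler_sum.
by rewrite hnu_sum sum_v_mul_Ktu_u_of ?ltxx // => y; exact: sink_v_gt0.
Qed.

Lemma sink_u_mass_le l : (1 <= l)%N ->
  \sum_x sink_u l x * mu x <= expR (C / eps).
Proof.
case: l => // l _; set M := \sum_x _.
have [y0 v_y0] := exists_sink_v_eq1 l.+1.
have /andP[_ vhat_ge1] : (1 <= sink_v l y0) && (1 <= sink_vhat l.+1 y0).
  by rewrite -le_min -sink_vS v_y0.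
have Ktu_le : Ktu (sink_u l.+1) y0 <= nu y0.
  move: vhat_ge1; rewrite sink_vhatE ler_pdivlMr ?mul1r //.
  exact/Ktu_gt0/sink_u_gt0.
have : expR (- (C / eps)) * nu y0 * M <= nu y0.
  apply: le_trans Ktu_le; rewrite /M big_distrr /=; apply: ler_sum => x _.
  rewrite mulrA mulrAC -[_ * nu y0 * _]mulrA [nu y0 * _]mulrC.
  by rewrite ler_wpM2r ?kernel_ge // ltW ?sink_u_gt0.
by rewrite mulrAC ger_pMl // expRN mulrC ler_pdivrMr ?expR_gt0 // mul1r.
Qed.

Definition sink_potential (l : nat) : R := \sum_x mu x * ln (sink_u l x).

Lemma sink_qE l : sink_q l = \sum_x sink_u l x * Kv (sink_v l) x.
Proof.
apply: eq_bigr => x _; rewrite /Kv big_distrr.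
by apply: eq_bigr => y _; rewrite /sink_pi /= mulrA.
Qed.

Lemma sink_potential_step l :
  sink_potential l + (1 - sink_q l) <= sink_potential l.+1.
Proof.
have := sum_mul_lnB_le (fun x => ltW (hmu_pos x)) (sink_u_gt0 l.+1) (sink_u_gt0 l).
have -> : \sum_x mu x * (ln (sink_u l x) - ln (sink_u l.+1 x)) =
    sink_potential l - sink_potential l.+1.
  by under eq_bigr do rewrite mulrBr; rewrite sumrB.
have -> : \sum_x mu x * (sink_u l x / sink_u l.+1 x) = sink_q l.
  rewrite sink_qE; apply: eq_bigr => x _.
  by rewrite sink_uSE invf_div mulrCA [mu x * _]mulrC divfK ?gt_eqF ?Kv_gt0.
rewrite hmu_sum; lra.
Qed.

Lemma sink_potential1_ge0 : 0 <= sink_potential 1.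
Proof.
apply: sumr_ge0 => x _; apply: mulr_ge0; first exact: ltW.
apply: ln_ge0; rewrite sink_uSE ler_pdivlMr ?mul1r; last exact/Kv_gt0/sink_v_gt0.
apply: le_trans (_ : \sum_y mu x * nu y <= _).
  by apply: ler_sum => y _; rewrite mulr1 kernel_le.
by rewrite -big_distrr /= hnu_sum mulr1.
Qed.

Lemma sink_potential_le l : (1 <= l)%N -> sink_potential l <= C / eps.
Proof.
move=> l_ge1; case: inhabited_X => x0.
apply: le_trans (sum_mul_ln_le_ln_sum hmu_pos hmu_sum (sink_u_gt0 l)) _.
rewrite -[C / eps]expRK ler_ln ?posrE ?expR_gt0 //; last first.
  by apply: (sumr_gt0 x0) => x; rewrite mulr_gt0 ?sink_u_gt0.
by under eq_bigr do rewrite mulrC; exact: sink_u_mass_le.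
Qed.

Lemma sink_potential_growth qt N :
  (forall j, (0 < j <= N)%N -> sink_q j < qt) ->
  sink_potential 1 + N%:R * (1 - qt) <= sink_potential N.+1.
Proof.
elim: N => [|N IH] q_lt; first by rewrite mul0r addr0.
have {}IH : sink_potential 1 + N%:R * (1 - qt) <= sink_potential N.+1.
  by apply: IH => j /andP[j_gt0 j_le]; rewrite q_lt // j_gt0 leqW.
have := sink_potential_step N.+1; have := q_lt N.+1 (leqnn _).
rewrite mulrSr; lra.
Qed.

Lemma exists_sink_q_ge qt N : C / eps < N%:R * (1 - qt) ->
  exists2 n, (0 < n <= N)%N & qt <= sink_q n.
Proof.
move=> N_large.
case: (boolP [exists n : 'I_N.+1, (0 < n)%N && (qt <= sink_q n)]).
  move=> /existsP[n /andP[n_gt0 qt_le]].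
  by exists n; rewrite // n_gt0 -ltnS ltn_ord.
move=> /existsPn no_n.
have q_lt n : (0 < n <= N)%N -> sink_q n < qt.
  move=> /andP[n_gt0 n_le]; have := no_n (Ordinal (n_le : (n < N.+1)%N)).
  by rewrite /= n_gt0 /= -ltNge.
have := sink_potential_growth q_lt; have := sink_potential_le (ltn0Sn N).
have := sink_potential1_ge0; lra.
Qed.

Lemma exists_sink_q_ge_bounded qt : qt < 1 ->
  exists n : nat, (1 <= n)%N /\
     n%:R <= 2 + C / (eps * (1 - qt)) /\ qt <= sink_q n.
Proof.
move=> qt_lt1; set B := C / (eps * (1 - qt)); set N := (Num.truncn B).+1.
have B_ge0 : 0 <= B by rewrite divr_ge0 ?cmax_ge0 // mulr_ge0 ?subr_ge0 // ltW.
have N_large : C / eps < N%:R * (1 - qt).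
  by rewrite -ltr_pdivrMr ?subr_gt0 // -mulrA -invfM truncnS_gt.
have [n /andP[n_gt0 n_le] qt_le] := exists_sink_q_ge N_large.
exists n; split=> //; split=> //.
apply: le_trans (_ : N%:R <= _); first by rewrite ler_nat.
by rewrite mulrSr addrC lerD ?truncn_le ?ler1n.
Qed.

End AsynchronousSinkhorn.

Theorem mainTheorem4 (R : realType) (X Y : finType)
  (mu : X -> R) (nu : Y -> R) (c : X -> Y -> R) (eps : R)
  (hmu_pos : forall x, 0 < mu x) (hmu_sum : \sum_(x : X) mu x = 1)
  (hnu_pos : forall y, 0 < nu y) (hnu_sum : \sum_(y : Y) nu y = 1)
  (hc : forall x y, 0 <= c x y) (heps : 0 < eps) (qt : R)
  (hqt0 : 0 < qt) (hqt1 : qt < 1) :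
  (exists n : nat, (1 <= n)%N /\
     n%:R <= 2 + cmax c / (eps * (1 - qt)) /\
     qt <= sink_q mu nu c eps n)
  /\ (forall l : nat, (1 <= l)%N ->
       \sum_(x : X) sink_u mu nu c eps l x * mu x <= expR (cmax c / eps)).
Proof.
split.
- exact: (exists_sink_q_ge_bounded hmu_pos hmu_sum hnu_pos hnu_sum hc heps hqt1).
- move=> l; exact: (sink_u_mass_le c hmu_pos hmu_sum hnu_pos hnu_sum heps).
Qed.
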